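(* Let $s_k, y_k \in \mathbb{R}^n$ be vectors with $y_k^{T}s_k \neq 0$, and define $$H_{k+1} = I - \frac{y_k s_k^{T} + s_k y_k^{T}}{y_k^{T}s_k} + 2\,\frac{y_k^{T}y_k}{(y_k^{T}s_k)^2}\, s_k s_k^{T}.$$ Then $H_{k+1}$ is symmetric positive definite and all of its eigenvalues are greater than $1/2$.
   Context: $I$ denotes the $n\times n$ identity matrix and $\|\cdot\|$ the Euclidean norm. In the paper, $s_k = x_{k+1}-x_k$ and $y_k = \nabla f(x_{k+1}) - \nabla f(x_k)$, but the claim is purely algebraic in $s_k, y_k$. *)

From HB Require Import structures.
From mathcomp Require Import all_boot all_order all_algebra.
From mathcomp Require Export reals.
Set Implicit Arguments. Unset Strict Implicit. Unset Printing Implicit Defensive.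
Import Order.TTheory GRing.Theory Num.Theory.
Local Open Scope ring_scope.

Definition dotv (R : realType) (n : nat) (u v : 'cV[R]_n) : R := (u^T *m v) 0 0.

Definition Hnext (R : realType) (n : nat) (s y : 'cV[R]_n) : 'M[R]_n :=
  1%:M - (dotv y s)^-1 *: (y *m s^T + s *m y^T)
       + (2 * dotv y y / (dotv y s) ^+ 2) *: (s *m s^T).

Definition spd (R : realType) (n : nat) (H : 'M[R]_n) : Prop :=
  H^T = H /\ forall x : 'cV[R]_n, x != 0 -> 0 < (x^T *m H *m x) 0 0.

(** Completing the square: with [a = y^T s] and [t = s^T x / a],
    [2 x^T H x = |x|^2 + |x - 2 t y|^2].  Hence [x^T H x > |x|^2 / 2] unless
    [x = 2 t y]; but then [s^T x = 2 t a = 2 s^T x], so [s^T x = 0] and [x = 0].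
    Applied to an eigenvector, the strict bound gives every eigenvalue [> 1/2]. *)
From HB Require Import structures.
From mathcomp Require Import all_boot all_order all_algebra.
From mathcomp Require Import reals.
From mathcomp Require Import ring lra.
Set Implicit Arguments. Unset Strict Implicit. Unset Printing Implicit Defensive.
Import Order.TTheory GRing.Theory Num.Theory.
Local Open Scope ring_scope.

Section DotProduct.
Variables (R : realType) (n : nat).
Implicit Types (u v w x : 'cV[R]_n) (H : 'M[R]_n).

Lemma dotvE u v : dotv u v = \sum_i u i 0 * v i 0.
Proof. by rewrite /dotv mxE; apply: eq_bigr => i _; rewrite mxE. Qed.

Lemma dotvC u v : dotv u v = dotv v u.
Proof. by rewrite !dotvE; apply: eq_bigr => i _; rewrite mulrC. Qed.

Lemma mulmx_trv u v : u^T *m v = (dotv u v)%:M.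
Proof. exact: mx11_scalar. Qed.

Lemma dotvDl u v w : dotv (u + v) w = dotv u w + dotv v w.
Proof. by rewrite /dotv linearD /= mulmxDl mxE. Qed.

Lemma dotvZl (k : R) u w : dotv (k *: u) w = k * dotv u w.
Proof. by rewrite /dotv linearZ /= -scalemxAl mxE. Qed.

Lemma dotvBl u v w : dotv (u - v) w = dotv u w - dotv v w.
Proof. by rewrite dotvDl -scaleN1r dotvZl mulN1r. Qed.

Lemma dotvv_ge0 u : 0 <= dotv u u.
Proof. by rewrite dotvE; apply: sumr_ge0 => i _; rewrite -expr2 sqr_ge0. Qed.

Lemma dotvv_eq0 u : (dotv u u == 0) = (u == 0).
Proof.
apply/idP/eqP => [|->]; last by rewrite dotvE big1 // => i _; rewrite mxE mul0r.
rewrite dotvE => /eqP u2_eq0; apply/matrixP => i j; rewrite ord1 mxE.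
have u2_sum_eq0 : \sum_k u k 0 ^+ 2 = 0.
  by rewrite -[RHS]u2_eq0; apply: eq_bigr => k _; rewrite expr2.
apply/eqP; rewrite -sqrf_eq0; apply/eqP.
by move/psumr_eq0P: u2_sum_eq0; apply=> // k _; apply: sqr_ge0.
Qed.

Lemma dotvv_gt0 u : u != 0 -> 0 < dotv u u.
Proof. by move=> u_neq0; rewrite lt_def dotvv_eq0 u_neq0 dotvv_ge0. Qed.

Lemma quad_rank1 x u v : x^T *m (u *m v^T) *m x = (dotv x u * dotv v x)%:M.
Proof. by rewrite !mulmxA mulmx_trv -mulmxA mulmx_trv -scalar_mxM. Qed.

Lemma eigenvalue_gt_of_quad_gt H (c : R) :
    (forall x, x != 0 -> c * dotv x x < (x^T *m H *m x) 0 0) ->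
  forall lambda, eigenvalue H lambda -> c < lambda.
Proof.
move=> quad_gt lambda /eigenvalueP [v Hv v_neq0].
have vT_neq0 : v^T != 0 by rewrite -(inj_eq trmx_inj) trmxK linear0.
have quadE : (v^T^T *m H *m v^T) 0 0 = lambda * dotv v^T v^T.
  by rewrite /dotv trmxK Hv -scalemxAl mxE.
have := quad_gt _ vT_neq0; rewrite quadE -subr_gt0 -mulrBl.
by rewrite pmulr_lgt0 ?subr_gt0 // dotvv_gt0.
Qed.

End DotProduct.

Section Hnext.
Variables (R : realType) (n : nat).
Implicit Types (s y x : 'cV[R]_n).

Lemma Hnext_sym s y : (Hnext s y)^T = Hnext s y.
Proof.
rewrite /Hnext !raddfD /= !raddfN /= !linearZ /= tr_scalar_mx.
by rewrite !trmx_mul !trmxK [X in 1%:M + X]addrC.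
Qed.

Lemma Hnext_quadE s y x : dotv y s != 0 ->
  2 * (x^T *m Hnext s y *m x) 0 0 =
  dotv x x + dotv (x - (2 * dotv s x / dotv y s) *: y)
                  (x - (2 * dotv s x / dotv y s) *: y).
Proof.
move=> ys_neq0.
rewrite /Hnext !(mulmxDr, mulmxDl, mulmxN, mulNmx) mulmx1 -!scalemxAr -!scalemxAl.
rewrite !(mulmxDr, mulmxDl) !quad_rank1 mulmx_trv !mxE /= !mulr1n.
rewrite !dotvBl !dotvZl ![dotv _ (_ - _)]dotvC !dotvBl !dotvZl.
rewrite (dotvC y x) (dotvC s x); field.
by rewrite ys_neq0.
Qed.

Lemma Hnext_quad_gt s y x : dotv y s != 0 -> x != 0 ->
  dotv x x / 2 < (x^T *m Hnext s y *m x) 0 0.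
Proof.
move=> ys_neq0 x_neq0.
set z := x - (2 * dotv s x / dotv y s) *: y.
have z_neq0 : z != 0.
  apply: contra x_neq0 => /eqP z_eq0.
  have x_eq : x = (2 * dotv s x / dotv y s) *: y.
    by apply/eqP; rewrite -subr_eq0 -/z z_eq0.
  have sx_eq0 : dotv s x = 0.
    have : dotv s x = 2 * dotv s x.
      by rewrite {1}x_eq dotvC dotvZl -[LHS]mulrA mulVf ?mulr1.
    lra.
  by rewrite x_eq sx_eq0 mulr0 mul0r scale0r.
have := Hnext_quadE x ys_neq0; rewrite -/z.
have := dotvv_gt0 z_neq0; lra.
Qed.

End Hnext.

Theorem lemma1 (R : realType) (n : nat) (s y : 'cV[R]_n) :
  dotv y s != 0 ->
  spd (Hnext s y) /\
  (forall lambda : R, eigenvalue (Hnext s y) lambda -> 1 / 2 < lambda).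
Proof.
move=> ys_neq0.
have quad_gt x : x != 0 -> 1 / 2 * dotv x x < (x^T *m Hnext s y *m x) 0 0.
  by move=> x_neq0; rewrite mul1r mulrC; apply: Hnext_quad_gt.
split; last exact: eigenvalue_gt_of_quad_gt.
split; first exact: Hnext_sym.
move=> x x_neq0; apply: le_lt_trans (quad_gt x x_neq0).
by rewrite mulr_ge0 ?dotvv_ge0 ?mul1r ?invr_ge0 ?ler0n.
Qed.
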